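(* Let $G$ be a circle of circumference $1$, let $\mathbf{x}\in G^n$ be such that the agents are not on one semicircle, and let $i\in N$, $x_i'\in G$ be such that the agents in $\mathbf{x}'=(x_i',\mathbf{x}_{-i})$ are not on one semicircle. Then $\mathrm{cost}(\mathrm{rc}(\mathbf{x}),x_i)\le\mathrm{cost}(\mathrm{rc}(\mathbf{x}'),x_i)$.
   Context: $d(x,y)$ is the shorter-arc length; $\hat x$ the antipode of $x$; $\mathrm{cost}(P,x_i)=\mathbb{E}_{y\sim P}[d(x_i,y)]$. Agents are on one semicircle if all locations lie in some closed arc of length $1/2$. RC: the antipodal points $\hat{x}_1,\dots,\hat{x}_n$ partition $G$ into arcs between cyclically consecutive antipodal points; $\mathrm{rc}$ returns the midpoint of each such arc with probability equal to its length. *)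

From Stdlib Require Import Reals Lra List Sorted Permutation.
Import ListNotations.
Open Scope R_scope.

(* The circle G of circumference 1 is R / Z; a point is represented by any
   real number, taken modulo 1. *)

Definition circ_dist (x y : R) : R :=
  let t := frac_part (x - y) in Rmin t (1 - t).

Definition antipode (x : R) : R := frac_part (x + / 2).

(* Agents 0..n-1 lie on one semicircle: all locations in some closed arc of
   length 1/2, i.e. the arc [a, a+1/2] (mod 1). *)
Definition on_one_semicircle (n : nat) (x : nat -> R) : Prop :=
  exists a : R, forall j, (j < n)%nat -> frac_part (x j - a) <= / 2.

Definition update (x : nat -> R) (i : nat) (v : R) : nat -> R :=
  fun j => if Nat.eqb j i then v else x j.

Definition antipodes (n : nat) (x : nat -> R) : list R :=
  map (fun j => antipode (x j)) (seq 0 n).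

Fixpoint consec (l : list R) : list (R * R) :=
  match l with
  | a :: ((b :: _) as t) => (a, b) :: consec t
  | _ => []
  end.

(* Given the antipodal points sorted increasingly in [0,1), the arcs between
   cyclically consecutive antipodal points, as (start, end) with start <= end
   (the wrap-around arc ends at (first point) + 1). *)
Definition arcs (s : list R) : list (R * R) :=
  match s with
  | [] => []
  | a :: _ => consec s ++ [(last s 0, a + 1)]
  end.

(* cost(rc(x), y) = E_{z ~ rc(x)} d(y, z): each arc's midpoint is chosen with
   probability equal to the arc length. [s] is the sorted list of antipodes. *)
Definition rc_cost_sorted (s : list R) (y : R) : R :=
  fold_right (fun ab acc => (snd ab - fst ab) * circ_dist y ((fst ab + snd ab) / 2) + acc)
             0 (arcs s).

Definition sorted_antipodes (n : nat) (x : nat -> R) (s : list R) : Prop :=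
  Sorted Rle s /\ Permutation s (antipodes n x).

(* Write tent w for the distance from w to the nearest integer, so that the
   cost of an agent at y is  sum over arcs [u,v] of (v-u) * tent(y-(u+v)/2).
   With P a primitive of tent, every summand splits as
   (P(y-u) - P(y-v)) + E(y-v, y-u), where E(A,B) = (B-A) tent((A+B)/2) - (P B - P A)
   is the error of the midpoint rule for tent on [A,B].  The P-parts telescope
   around the circle to the integral of tent over a period, 1/4; hence
   cost = 1/4 + sum of the midpoint errors (rc_cost_decomp).

   When the agents are not on one semicircle every arc has length <= 1/2; on
   such an interval tent is concave if it avoids the integers (error >= 0),
   convex if it avoids the half-integers (error <= 0), and across an integer
   the error is -(min of tent at the endpoints)^2.  Let gap y s be the distance
   from y to the nearest point of s.  For the truthful profile the antipode of
   y is an endpoint, so all errors are <= 0 and the arc through y gives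
   cost <= 1/4 - gap^2 (truthful_error_bound); for any profile the arc through
   y is the only one with a negative error, so cost >= 1/4 - gap'^2
   (deviation_error_bound).  The deviation only removes the antipode of y, at
   distance 1/2, from the antipodal set, so gap' <= gap, which proves the
   theorem. *)

From Stdlib Require Import Reals List Sorted Permutation.
From Stdlib Require Import Lra Lia Classical.
Import ListNotations.
Open Scope R_scope.

Ltac destruct_Rabs := unfold Rabs in *; repeat match goal with
  | H : context [Rcase_abs ?a] |- _ => destruct (Rcase_abs a)
  | |- context [Rcase_abs ?a] => destruct (Rcase_abs a)
  end.

Lemma Int_part_spec (w : R) (k : Z) : IZR k <= w < IZR k + 1 -> Int_part w = k.
Proof.
  intros [H1 H2]. unfold Int_part.
  assert (up w = (k + 1)%Z) as ->
    by (symmetry; apply tech_up; rewrite plus_IZR; simpl; lra).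
  lia.
Qed.

Lemma frac_part_spec (w : R) (k : Z) :
  IZR k <= w < IZR k + 1 -> frac_part w = w - IZR k.
Proof. intros H. unfold frac_part. now rewrite (Int_part_spec w k H). Qed.

Lemma frac_part_bounds (w : R) : 0 <= frac_part w < 1.
Proof. unfold frac_part. destruct (base_Int_part w). lra. Qed.

Lemma frac_part_decomp (w : R) : w = IZR (Int_part w) + frac_part w.
Proof. unfold frac_part. ring. Qed.

Lemma frac_part_shift (w : R) (k : Z) : frac_part (w + IZR k) = frac_part w.
Proof.
  destruct (base_Int_part w).
  rewrite (frac_part_spec _ (Int_part w + k)); rewrite plus_IZR.
  - unfold frac_part. ring.
  - lra.
Qed.

Lemma nearest_integer (w : R) : exists k : Z, Rabs (w - IZR k) <= 1/2.
Proof.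
  exists (Int_part (w + 1/2)). destruct (base_Int_part (w + 1/2)).
  destruct_Rabs; lra.
Qed.

Lemma IZR_close_eq (k k' : Z) : -1 < IZR k - IZR k' < 1 -> k = k'.
Proof.
  rewrite <- minus_IZR. intros [H1 H2].
  apply lt_IZR in H1. apply lt_IZR in H2. lia.
Qed.

Definition tent (w : R) : R := Rmin (frac_part w) (1 - frac_part w).

Lemma circ_dist_tent (y z : R) : circ_dist y z = tent (y - z).
Proof. reflexivity. Qed.

Lemma tent_local (w : R) (k : Z) :
  Rabs (w - IZR k) <= 1/2 -> tent w = Rabs (w - IZR k).
Proof.
  intros H. unfold tent. destruct (Rle_dec (IZR k) w).
  - rewrite (frac_part_spec w k) by (destruct_Rabs; lra).
    unfold Rmin; destruct Rle_dec; destruct_Rabs; lra.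
  - rewrite (frac_part_spec w (k - 1)) by (rewrite minus_IZR; simpl; destruct_Rabs; lra).
    rewrite minus_IZR; simpl. unfold Rmin; destruct Rle_dec; destruct_Rabs; lra.
Qed.

Lemma tent_bounds (w : R) : 0 <= tent w <= 1/2.
Proof.
  destruct (nearest_integer w) as [k Hk]. rewrite (tent_local w k Hk).
  destruct_Rabs; lra.
Qed.

Lemma tent_period (w : R) : tent (w + 1) = tent w.
Proof.
  destruct (nearest_integer w) as [k Hk]. rewrite (tent_local w k Hk).
  rewrite (tent_local (w + 1) (k + 1)); rewrite plus_IZR; simpl;
    replace (w + 1 - (IZR k + 1)) with (w - IZR k) by ring; auto.
Qed.

Lemma tent_antipode (y : R) : tent (y - antipode y) = 1/2.
Proof.
  rewrite (tent_local _ (Int_part (y + / 2))); unfold antipode, frac_part;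
    destruct_Rabs; lra.
Qed.

Definition tent_prim_frac (t : R) : R :=
  if Rle_dec t (1/2) then t * t / 2 else 1/4 - (1 - t) * (1 - t) / 2.

(* The primitive of tent vanishing at 0; each period contributes 1/4. *)
Definition tent_prim (w : R) : R :=
  IZR (Int_part w) / 4 + tent_prim_frac (frac_part w).

Lemma tent_prim_local (w : R) (k : Z) : Rabs (w - IZR k) <= 1/2 ->
  tent_prim w = IZR k / 4 + (w - IZR k) * Rabs (w - IZR k) / 2.
Proof.
  intros H. unfold tent_prim, tent_prim_frac. destruct (Rle_dec (IZR k) w).
  - rewrite (frac_part_spec w k), (Int_part_spec w k) by (destruct_Rabs; lra).
    destruct Rle_dec; destruct_Rabs; try lra; field.
  - rewrite (frac_part_spec w (k - 1)), (Int_part_spec w (k - 1))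
      by (rewrite minus_IZR; simpl; destruct_Rabs; lra).
    rewrite minus_IZR; simpl. destruct Rle_dec; destruct_Rabs; try lra;
      try (replace w with (IZR k - 1/2) by lra); field.
Qed.

Lemma tent_prim_period (w : R) : tent_prim w - tent_prim (w - 1) = 1/4.
Proof.
  destruct (nearest_integer w) as [k Hk]. rewrite (tent_prim_local w k Hk).
  rewrite (tent_prim_local (w - 1) (k - 1)); rewrite minus_IZR; simpl;
    replace (w - 1 - (IZR k - 1)) with (w - IZR k) by ring; auto.
  field.
Qed.

Definition midpoint_error (A B : R) : R :=
  (B - A) * tent ((A + B) / 2) - (tent_prim B - tent_prim A).

Lemma midpoint_error_local (A B : R) (k : Z) : A <= B ->
  Rabs (A - IZR k) <= 1/2 -> Rabs (B - IZR k) <= 1/2 ->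
  midpoint_error A B = (B - A) * Rabs ((A + B) / 2 - IZR k)
    - ((B - IZR k) * Rabs (B - IZR k) - (A - IZR k) * Rabs (A - IZR k)) / 2.
Proof.
  intros H0 H1 H2. unfold midpoint_error.
  rewrite (tent_local _ k) by (destruct_Rabs; lra).
  rewrite (tent_prim_local A k H1), (tent_prim_local B k H2). field.
Qed.

Lemma midpoint_error_across_integer (A B : R) (k : Z) :
  A < IZR k < B -> B - A <= 1/2 ->
  midpoint_error A B = - (Rmin (tent A) (tent B)) ^ 2.
Proof.
  intros H H'. rewrite (midpoint_error_local A B k) by (destruct_Rabs; lra).
  rewrite (tent_local A k), (tent_local B k) by (destruct_Rabs; lra).
  unfold Rmin; destruct Rle_dec; destruct_Rabs; try lra; nra.
Qed.

(* Away from the integers tent is concave: the midpoint rule overestimates. *)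
Lemma midpoint_error_concave (A B : R) : 0 <= B - A <= 1/2 ->
  (forall k : Z, ~ (A < IZR k < B)) -> 0 <= midpoint_error A B.
Proof.
  intros H Hn. destruct (nearest_integer ((A + B) / 2)) as [k Hk].
  specialize (Hn k).
  destruct (Rlt_dec A (IZR k - 1/2)); [|destruct (Rlt_dec (IZR k + 1/2) B)].
  - unfold midpoint_error. rewrite (tent_local _ k Hk).
    rewrite (tent_prim_local A (k - 1))
      by (rewrite minus_IZR; simpl; destruct_Rabs; lra).
    rewrite (tent_prim_local B k) by (destruct_Rabs; lra).
    rewrite minus_IZR; simpl. destruct_Rabs; try lra; nra.
  - unfold midpoint_error. rewrite (tent_local _ k Hk).
    rewrite (tent_prim_local B (k + 1))
      by (rewrite plus_IZR; simpl; destruct_Rabs; lra).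
    rewrite (tent_prim_local A k) by (destruct_Rabs; lra).
    rewrite plus_IZR; simpl. destruct_Rabs; try lra; nra.
  - rewrite (midpoint_error_local A B k) by (destruct_Rabs; lra).
    destruct_Rabs; try lra; nra.
Qed.

(* Away from the half-integers tent is convex: the midpoint rule underestimates. *)
Lemma midpoint_error_convex (A B : R) : 0 <= B - A <= 1/2 ->
  (forall k : Z, ~ (A < IZR k + 1/2 < B)) -> midpoint_error A B <= 0.
Proof.
  intros H Hn. destruct (nearest_integer ((A + B) / 2)) as [k Hk].
  destruct (Rlt_dec A (IZR k - 1/2)).
  { exfalso. apply (Hn (k - 1)%Z). rewrite minus_IZR; simpl. destruct_Rabs; lra. }
  destruct (Rlt_dec (IZR k + 1/2) B).
  { exfalso. apply (Hn k). destruct_Rabs; lra. }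
  rewrite (midpoint_error_local A B k) by (destruct_Rabs; lra).
  destruct_Rabs; try lra; nra.
Qed.

Definition lsum {T : Type} (f : T -> R) (l : list T) : R :=
  fold_right (fun a acc => f a + acc) 0 l.

Lemma lsum_app {T : Type} (f : T -> R) (l1 l2 : list T) :
  lsum f (l1 ++ l2) = lsum f l1 + lsum f l2.
Proof. induction l1 as [|a l1 IH]; simpl; [ring|]. rewrite IH. ring. Qed.

Lemma lsum_plus {T : Type} (f g : T -> R) (l : list T) :
  lsum (fun a => f a + g a) l = lsum f l + lsum g l.
Proof. induction l as [|a l IH]; simpl; [ring|]. rewrite IH. ring. Qed.

Lemma lsum_ext {T : Type} (f g : T -> R) (l : list T) :
  (forall a, In a l -> f a = g a) -> lsum f l = lsum g l.
Proof.
  induction l as [|a l IH]; simpl; intros H; auto.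
  rewrite H, IH; auto.
Qed.

Lemma lsum_nonneg {T : Type} (f : T -> R) (l : list T) :
  (forall a, In a l -> 0 <= f a) -> 0 <= lsum f l.
Proof.
  induction l as [|a l IH]; simpl; intros H; [lra|].
  pose proof (H a (or_introl eq_refl)). pose proof (IH (fun b Hb => H b (or_intror Hb))).
  lra.
Qed.

Lemma lsum_nonpos {T : Type} (f : T -> R) (l : list T) :
  (forall a, In a l -> f a <= 0) -> lsum f l <= 0.
Proof.
  induction l as [|a l IH]; simpl; intros H; [lra|].
  pose proof (H a (or_introl eq_refl)). pose proof (IH (fun b Hb => H b (or_intror Hb))).
  lra.
Qed.

Lemma lsum_le_member {T : Type} (f : T -> R) (l : list T) (a : T) :
  (forall b, In b l -> f b <= 0) -> In a l -> lsum f l <= f a.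
Proof.
  induction l as [|c l IH]; simpl; intros H Ha; [contradiction|].
  pose proof (H c (or_introl eq_refl)).
  destruct Ha as [<- | Ha].
  - pose proof (lsum_nonpos f l (fun b Hb => H b (or_intror Hb))). lra.
  - pose proof (IH (fun b Hb => H b (or_intror Hb)) Ha). lra.
Qed.

Lemma sorted_head_min (a : R) (l : list R) :
  Sorted Rle (a :: l) -> forall q, In q (a :: l) -> a <= q.
Proof.
  intros H q Hq. apply Sorted_StronglySorted in H; [|intros ? ? ?; apply Rle_trans].
  inversion H as [|? ? _ Hall]; subst.
  destruct Hq as [<- | Hq]; [lra|]. rewrite Forall_forall in Hall. auto.
Qed.

Lemma last_In (a : R) (l : list R) : In (last (a :: l) 0) (a :: l).
Proof.
  revert a; induction l as [|b l IH]; intros a; simpl; [auto|].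
  right. specialize (IH b). simpl in IH. destruct l; auto.
Qed.

Lemma sorted_last_max (l : list R) :
  Sorted Rle l -> forall q, In q l -> q <= last l 0.
Proof.
  induction l as [|a [|b l] IH]; intros H q Hq; [contradiction| |].
  - destruct Hq as [<- | []]. simpl. lra.
  - change (last (a :: b :: l) 0) with (last (b :: l) 0).
    assert (Hs : Sorted Rle (b :: l)) by (inversion H; auto).
    destruct Hq as [<- | Hq]; [|apply IH; auto].
    apply Rle_trans with b; [|apply IH; simpl; auto].
    apply (sorted_head_min a (b :: l)); simpl; auto.
Qed.

Lemma consec_telescope (Q : R -> R) (a : R) (l : list R) :
  lsum (fun p => Q (fst p) - Q (snd p)) (consec (a :: l)) = Q a - Q (last (a :: l) 0).
Proof.
  revert a; induction l as [|b l IH]; intros a; simpl; [ring|].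
  specialize (IH b). simpl in IH. rewrite IH. destruct l; simpl; ring.
Qed.

Lemma consec_props (l : list R) : Sorted Rle l -> forall p, In p (consec l) ->
  In (fst p) l /\ In (snd p) l /\ fst p <= snd p /\
  (forall q, In q l -> q <= fst p \/ snd p <= q).
Proof.
  induction l as [|a [|b l] IH]; intros H p Hp; try contradiction.
  assert (Hs : Sorted Rle (b :: l)) by (inversion H; auto).
  assert (Hab : a <= b) by (apply (sorted_head_min a (b :: l)); simpl; auto).
  destruct Hp as [<- | Hp].
  - simpl. repeat split; auto. intros q [<- | Hq]; [left; lra|].
    right. exact (sorted_head_min b l Hs q Hq).
  - destruct (IH Hs p Hp) as [H1 [H2 [H3 H4]]].
    repeat split; try (simpl; auto; fail).
    intros q [<- | Hq]; auto. left. apply Rle_trans with b; auto.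
    apply (sorted_head_min b l); auto.
Qed.

Lemma consec_cover (c : R) (l : list R) (w : R) : Sorted Rle (c :: l) ->
  c <= w -> w <= last (c :: l) 0 ->
  In w (c :: l) \/ exists p, In p (consec (c :: l)) /\ fst p < w < snd p.
Proof.
  revert c; induction l as [|b l IH]; intros c Hs H1 H2.
  { simpl in H2. left. simpl. left. lra. }
  destruct (Req_dec c w) as [<- | Hne]; [left; simpl; auto|].
  destruct (Rlt_dec w b).
  { right. exists (c, b). simpl. split; [auto | lra]. }
  assert (Hs' : Sorted Rle (b :: l)) by (inversion Hs; auto).
  change (last (c :: b :: l) 0) with (last (b :: l) 0) in H2.
  destruct (IH b Hs') as [H3 | [p [Hp H3]]]; try lra.
  - left. simpl in *. auto.
  - right. exists p. split; [simpl; auto | auto].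
Qed.

(* Lower bound for a sum over consecutive pairs when only pairs straddling w
   may have negative terms: at most one pair straddles w, and none does once w
   lies beyond the last point (the strengthened invariant for the induction). *)
Lemma consec_lsum_ge (f : R * R -> R) (w d : R) (l : list R) :
  Sorted Rle l -> d <= 0 ->
  (forall p, In p (consec l) -> fst p < w < snd p -> d <= f p) ->
  (forall p, In p (consec l) -> ~ (fst p < w < snd p) -> 0 <= f p) ->
  d <= lsum f (consec l) /\ (last l 0 <= w -> 0 <= lsum f (consec l)).
Proof.
  induction l as [|c [|b l] IH]; intros Hs Hd H1 H2; try (simpl; lra).
  assert (Hs' : Sorted Rle (b :: l)) by (inversion Hs; auto).
  change (consec (c :: b :: l)) with ((c, b) :: consec (b :: l)) in *.
  change (last (c :: b :: l) 0) with (last (b :: l) 0).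
  cbn [lsum fold_right]. fold (lsum f (consec (b :: l))).
  destruct (classic (c < w < b)) as [Hin | Hout].
  - assert (d <= f (c, b)) by (apply H1; simpl; auto).
    assert (0 <= lsum f (consec (b :: l))).
    { apply lsum_nonneg. intros p Hp. apply H2; [simpl; auto|].
      destruct (consec_props _ Hs' p Hp) as [Hf _].
      pose proof (sorted_head_min b l Hs' _ Hf). lra. }
    split; [lra|]. intros HL.
    pose proof (sorted_last_max _ Hs' b (or_introl eq_refl)). lra.
  - assert (0 <= f (c, b)) by (apply H2; simpl; auto).
    destruct IH as [IH1 IH2]; auto.
    + intros; apply H1; simpl; auto.
    + intros; apply H2; simpl; auto.
    + split; [lra|]. intros HL. specialize (IH2 HL). lra.
Qed.

Definition in_unit_interval (s : list R) : Prop := forall q, In q s -> 0 <= q < 1.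

Lemma arc_geometry (a : R) (l : list R) :
  Sorted Rle (a :: l) -> in_unit_interval (a :: l) -> forall p, In p (arcs (a :: l)) ->
  a <= fst p /\ fst p <= snd p /\ snd p <= a + 1 /\ In (fst p) (a :: l) /\
  (In (snd p) (a :: l) \/ In (snd p - 1) (a :: l)).
Proof.
  intros Hs Hu p Hp. pose proof (Hu a (or_introl eq_refl)).
  unfold arcs in Hp. apply in_app_or in Hp. destruct Hp as [Hp | [<- | []]].
  - destruct (consec_props _ Hs p Hp) as [H1 [H2 [H3 _]]].
    pose proof (Hu _ H1). pose proof (Hu _ H2). pose proof (sorted_head_min a l Hs _ H1).
    repeat split; auto; lra.
  - cbn [fst snd]. pose proof (last_In a l) as HL.
    pose proof (Hu _ HL). pose proof (sorted_head_min a l Hs _ HL).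
    repeat split; auto; try lra.
    right. replace (a + 1 - 1) with a by ring. simpl; auto.
Qed.

Lemma arc_empty_interior (a : R) (l : list R) :
  Sorted Rle (a :: l) -> in_unit_interval (a :: l) -> forall p, In p (arcs (a :: l)) ->
  forall q, In q (a :: l) -> forall k : Z, ~ (fst p < q + IZR k < snd p).
Proof.
  intros Hs Hu p Hp q Hq k Hk. pose proof (Hu _ Hq).
  unfold arcs in Hp. apply in_app_or in Hp. destruct Hp as [Hp | [<- | []]].
  - destruct (consec_props _ Hs p Hp) as [H1 [H2 _ ]].
    pose proof (Hu _ H1). pose proof (Hu _ H2).
    assert (k = 0%Z) by (apply (IZR_close_eq k 0); simpl; lra). subst k.
    destruct (consec_props _ Hs p Hp) as [_ [_ [_ Hsep]]].
    simpl in Hk. destruct (Hsep q Hq); lra.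
  - cbn [fst snd] in Hk.
    pose proof (sorted_head_min a l Hs _ Hq). pose proof (sorted_last_max _ Hs _ Hq).
    destruct (Z.le_gt_cases k 0) as [Hk0 | Hk0].
    + apply IZR_le in Hk0. simpl in Hk0. lra.
    + assert (Hk1 : (1 <= k)%Z) by lia. apply IZR_le in Hk1. simpl in Hk1. lra.
Qed.

Lemma arcs_cover (a : R) (l : list R) (w : R) :
  Sorted Rle (a :: l) -> in_unit_interval (a :: l) -> a <= w < a + 1 ->
  In w (a :: l) \/ exists p, In p (arcs (a :: l)) /\ fst p < w < snd p.
Proof.
  intros Hs Hu Hw. pose proof (Hu _ (last_In a l)).
  destruct (Rle_dec w (last (a :: l) 0)).
  - destruct (consec_cover a l w Hs) as [Hc | [p [Hp Hc]]]; try lra; auto.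
    right. exists p. split; auto. unfold arcs. apply in_or_app; auto.
  - right. exists (last (a :: l) 0, a + 1).
    split; [unfold arcs; apply in_or_app; simpl; auto|]. cbn [fst snd]. lra.
Qed.

Lemma arcs_lsum_ge (f : R * R -> R) (w d a : R) (l : list R) :
  Sorted Rle (a :: l) -> d <= 0 ->
  (forall p, In p (arcs (a :: l)) -> fst p < w < snd p -> d <= f p) ->
  (forall p, In p (arcs (a :: l)) -> ~ (fst p < w < snd p) -> 0 <= f p) ->
  d <= lsum f (arcs (a :: l)).
Proof.
  intros Hs Hd H1 H2. unfold arcs. rewrite lsum_app. cbn [lsum fold_right].
  set (wrap := (last (a :: l) 0, a + 1)).
  assert (Hwrap : In wrap (consec (a :: l) ++ [wrap])) by (apply in_or_app; simpl; auto).
  destruct (consec_lsum_ge f w d (a :: l) Hs Hd) as [C1 C2].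
  - intros; apply H1; [apply in_or_app; auto | auto].
  - intros; apply H2; [apply in_or_app; auto | auto].
  - destruct (classic (fst wrap < w < snd wrap)) as [Hin | Hout].
    + pose proof (H1 wrap Hwrap Hin). unfold wrap in Hin; cbn [fst snd] in Hin.
      pose proof (C2 ltac:(lra)). lra.
    + pose proof (H2 wrap Hwrap Hout). lra.
Qed.

Definition arc_error (y : R) (p : R * R) : R := midpoint_error (y - snd p) (y - fst p).

Lemma rc_cost_decomp (a : R) (l : list R) (y : R) :
  rc_cost_sorted (a :: l) y = 1/4 + lsum (arc_error y) (arcs (a :: l)).
Proof.
  change (rc_cost_sorted (a :: l) y) with
    (lsum (fun p => (snd p - fst p) * circ_dist y ((fst p + snd p) / 2)) (arcs (a :: l))).
  rewrite (lsum_ext _ (fun p => arc_error y p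
                       + (tent_prim (y - fst p) - tent_prim (y - snd p)))).
  2:{ intros p _. unfold arc_error, midpoint_error. rewrite circ_dist_tent.
      replace ((y - snd p + (y - fst p)) / 2) with (y - (fst p + snd p) / 2) by field.
      ring. }
  rewrite lsum_plus. unfold arcs at 2. rewrite lsum_app.
  rewrite (consec_telescope (fun u => tent_prim (y - u))). cbn [lsum fold_right fst snd].
  pose proof (tent_prim_period (y - a)).
  replace (y - (a + 1)) with (y - a - 1) by ring. lra.
Qed.

Lemma antipodes_In (n : nat) (x : nat -> R) (j : nat) :
  (j < n)%nat -> In (antipode (x j)) (antipodes n x).
Proof.
  intros H. unfold antipodes. apply (in_map (fun j => antipode (x j))).
  apply in_seq. lia.
Qed.

Lemma In_antipodes (n : nat) (x : nat -> R) (q : R) :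
  In q (antipodes n x) -> exists j, (j < n)%nat /\ q = antipode (x j).
Proof.
  unfold antipodes. intros H. apply in_map_iff in H. destruct H as [j [<- Hj]].
  apply in_seq in Hj. exists j. split; [lia | auto].
Qed.

Lemma sorted_antipodes_unit (n : nat) (x : nat -> R) (s : list R) :
  sorted_antipodes n x s -> in_unit_interval s.
Proof.
  intros [_ Hp] q Hq. apply (Permutation_in _ Hp), In_antipodes in Hq.
  destruct Hq as [j [_ ->]]. apply frac_part_bounds.
Qed.

Lemma sorted_antipodes_In (n : nat) (x : nat -> R) (s : list R) (j : nat) :
  sorted_antipodes n x s -> (j < n)%nat -> In (antipode (x j)) s.
Proof.
  intros [_ Hp] Hj. apply (Permutation_in _ (Permutation_sym Hp)).
  apply antipodes_In; auto.
Qed.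

(* If the agents are not on one semicircle, every arc has length at most 1/2:
   otherwise all antipodes, hence all agents, avoid an open half-circle. *)
Lemma arcs_short (n : nat) (x : nat -> R) (a : R) (l : list R) :
  ~ on_one_semicircle n x -> sorted_antipodes n x (a :: l) ->
  forall p, In p (arcs (a :: l)) -> snd p - fst p <= 1/2.
Proof.
  intros Hno Hsa p Hp. pose proof (sorted_antipodes_unit _ _ _ Hsa) as Hu.
  pose proof (arc_empty_interior a l (proj1 Hsa) Hu p Hp) as Hempty.
  destruct (Rle_dec (snd p - fst p) (1/2)) as [Hle | Hgt]; auto. exfalso.
  apply Hno. exists (snd p - 1/2). intros j Hj.
  set (q := antipode (x j)).
  assert (Hq : In q (a :: l)) by (apply (sorted_antipodes_In n x); auto).
  assert (Eq : x j - (snd p - 1/2) = (q - snd p) + IZR (Int_part (x j + /2)))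
    by (unfold q, antipode, frac_part; field).
  rewrite Eq, frac_part_shift.
  pose proof (frac_part_bounds (q - snd p)). pose proof (frac_part_decomp (q - snd p)).
  specialize (Hempty q Hq (- Int_part (q - snd p) - 1)%Z).
  rewrite minus_IZR, opp_IZR in Hempty. simpl in Hempty.
  destruct (Rle_dec (frac_part (q - snd p)) (/2)); auto. exfalso. apply Hempty. lra.
Qed.

Definition gap (y : R) (s : list R) : R :=
  fold_right (fun q m => Rmin (tent (y - q)) m) (1/2) s.

Lemma gap_bounds (y : R) (s : list R) : 0 <= gap y s <= 1/2.
Proof.
  induction s as [|q s IH]; simpl; [lra|].
  pose proof (tent_bounds (y - q)). unfold Rmin; destruct Rle_dec; lra.
Qed.

Lemma gap_le (y : R) (s : list R) (q : R) : In q s -> gap y s <= tent (y - q).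
Proof.
  induction s as [|c s IH]; simpl; [contradiction|]. intros [<- | Hq].
  - apply Rmin_l.
  - eapply Rle_trans; [apply Rmin_r | auto].
Qed.

Lemma gap_glb (y : R) (s : list R) (m : R) : m <= 1/2 ->
  (forall q, In q s -> m <= tent (y - q)) -> m <= gap y s.
Proof.
  intros Hm. induction s as [|c s IH]; simpl; intros H; [lra|].
  apply Rmin_glb; auto.
Qed.

(* The arc containing y (mod 1) is bounded by the two points of s nearest to
   y, so it contributes exactly -(gap y s)^2. *)
Lemma crossing_arc_error (a : R) (l : list R) (y : R) (k : Z) (p : R * R) :
  Sorted Rle (a :: l) -> in_unit_interval (a :: l) -> In p (arcs (a :: l)) ->
  snd p - fst p <= 1/2 -> fst p < y - IZR k < snd p ->
  arc_error y p = - (gap y (a :: l)) ^ 2.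
Proof.
  intros Hs Hu Hp Hshort Hy. unfold arc_error.
  rewrite (midpoint_error_across_integer _ _ k) by lra.
  destruct (arc_geometry a l Hs Hu p Hp) as [_ [_ [_ [Hfst Hsnd]]]].
  assert (Hsnd_gap : gap y (a :: l) <= tent (y - snd p)).
  { destruct Hsnd as [Hsnd | Hsnd]; [apply gap_le; auto|].
    replace (y - snd p) with (y - (snd p - 1) - 1) by ring.
    rewrite <- tent_period. replace (y - (snd p - 1) - 1 + 1) with (y - (snd p - 1)) by ring.
    apply gap_le; auto. }
  assert (Hmin : Rmin (tent (y - snd p)) (tent (y - fst p)) <= gap y (a :: l)).
  { apply gap_glb; [unfold Rmin; destruct Rle_dec; apply tent_bounds|].
    intros q Hq. pose proof (arc_empty_interior a l Hs Hu p Hp q Hq) as Hempty.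
    rewrite (tent_local (y - snd p) k), (tent_local (y - fst p) k) by (destruct_Rabs; lra).
    destruct (nearest_integer (y - q)) as [j Hj]. rewrite (tent_local _ j Hj).
    apply Rnot_lt_le. intros Hlt. apply (Hempty (j - k)%Z). rewrite minus_IZR.
    revert Hlt. unfold Rmin; destruct Rle_dec; destruct_Rabs; lra. }
  pose proof (gap_le y _ _ Hfst).
  replace (Rmin (tent (y - snd p)) (tent (y - fst p))) with (gap y (a :: l)); [ring|].
  unfold Rmin in *; destruct Rle_dec; lra.
Qed.

Lemma integer_shift_into (a y : R) : exists k : Z, a <= y - IZR k < a + 1.
Proof.
  exists (Int_part (y - a)).
  pose proof (frac_part_bounds (y - a)). pose proof (frac_part_decomp (y - a)). lra.
Qed.

(* Truthful profile: the antipode of y is a point of s, so no arc contains a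
   half-integer in the y-coordinates; all errors are <= 0 and the arc through
   y gives the bound. *)
Lemma truthful_error_bound (a : R) (l : list R) (y : R) :
  Sorted Rle (a :: l) -> in_unit_interval (a :: l) -> In (antipode y) (a :: l) ->
  (forall p, In p (arcs (a :: l)) -> snd p - fst p <= 1/2) ->
  lsum (arc_error y) (arcs (a :: l)) <= - (gap y (a :: l)) ^ 2.
Proof.
  intros Hs Hu Hanti Hshort.
  assert (Hneg : forall p, In p (arcs (a :: l)) -> arc_error y p <= 0).
  { intros p Hp. pose proof (Hshort p Hp).
    pose proof (arc_geometry a l Hs Hu p Hp) as [_ [Hle _]].
    apply midpoint_error_convex; [lra|]. intros j Hj.
    apply (arc_empty_interior a l Hs Hu p Hp _ Hanti (Int_part (y + /2) - j - 1)%Z).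
    rewrite !minus_IZR. unfold antipode, frac_part. simpl. lra. }
  destruct (integer_shift_into a y) as [k Hk].
  destruct (arcs_cover a l (y - IZR k) Hs Hu Hk) as [Hw | [p [Hp Hw]]].
  - pose proof (gap_le y _ _ Hw) as Hgap. pose proof (gap_bounds y (a :: l)).
    rewrite (tent_local _ k) in Hgap by (destruct_Rabs; lra).
    replace (y - (y - IZR k) - IZR k) with 0 in Hgap by ring.
    rewrite Rabs_R0 in Hgap. replace (gap y (a :: l)) with 0 by lra.
    replace (- 0 ^ 2) with 0 by ring. apply lsum_nonpos; auto.
  - rewrite <- (crossing_arc_error a l y k p); auto.
    apply lsum_le_member; auto.
Qed.

(* Any profile: only the arc through y can have a negative error. *)
Lemma deviation_error_bound (a : R) (l : list R) (y : R) :
  Sorted Rle (a :: l) -> in_unit_interval (a :: l) ->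
  (forall p, In p (arcs (a :: l)) -> snd p - fst p <= 1/2) ->
  - (gap y (a :: l)) ^ 2 <= lsum (arc_error y) (arcs (a :: l)).
Proof.
  intros Hs Hu Hshort. destruct (integer_shift_into a y) as [k Hk].
  apply (arcs_lsum_ge _ (y - IZR k) _ a l Hs).
  - pose proof (gap_bounds y (a :: l)). nra.
  - intros p Hp Hw. rewrite (crossing_arc_error a l y k p); auto. lra.
  - intros p Hp Hw. pose proof (Hshort p Hp).
    destruct (arc_geometry a l Hs Hu p Hp) as [H1 [H2 [H3 _]]].
    apply midpoint_error_concave; [lra|]. intros j Hj. apply Hw.
    assert (j = k) as -> by (apply IZR_close_eq; lra). lra.
Qed.

(* After the deviation, every old antipode except that of x_i is still present,
   and the antipode of x_i is as far from x_i as possible: the gap shrinks. *)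
Lemma gap_deviation (n : nat) (x : nat -> R) (i : nat) (xi' : R) (s s' : list R) :
  sorted_antipodes n x s -> sorted_antipodes n (update x i xi') s' ->
  gap (x i) s' <= gap (x i) s.
Proof.
  intros Hsa Hsa'. pose proof (gap_bounds (x i) s') as Hb.
  apply gap_glb; [lra|]. intros q Hq.
  destruct Hsa as [_ Hp]. apply (Permutation_in _ Hp), In_antipodes in Hq.
  destruct Hq as [j [Hj ->]]. destruct (Nat.eq_dec j i) as [-> | Hne].
  - rewrite tent_antipode. lra.
  - apply gap_le. replace (x j) with (update x i xi' j).
    + apply (sorted_antipodes_In n _ _ j Hsa' Hj).
    + unfold update. destruct (Nat.eqb_spec j i); [contradiction | auto].
Qed.

Theorem mainTheorem17 (n : nat) (x : nat -> R) (i : nat) (xi' : R)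
  (s s' : list R) :
  (i < n)%nat ->
  ~ on_one_semicircle n x ->
  ~ on_one_semicircle n (update x i xi') ->
  sorted_antipodes n x s ->
  sorted_antipodes n (update x i xi') s' ->
  rc_cost_sorted s (x i) <= rc_cost_sorted s' (x i).
Proof.
  intros Hi Hno Hno' Hsa Hsa'.
  pose proof (sorted_antipodes_In _ _ _ i Hsa Hi) as Hanti.
  pose proof (sorted_antipodes_In _ _ _ i Hsa' Hi) as Hanti'.
  destruct s as [|a l]; [contradiction|]. destruct s' as [|a' l']; [contradiction|].
  rewrite !rc_cost_decomp.
  pose proof (truthful_error_bound a l (x i) (proj1 Hsa)
    (sorted_antipodes_unit _ _ _ Hsa) Hanti (arcs_short _ _ _ _ Hno Hsa)).
  pose proof (deviation_error_bound a' l' (x i) (proj1 Hsa')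
    (sorted_antipodes_unit _ _ _ Hsa') (arcs_short _ _ _ _ Hno' Hsa')).
  pose proof (gap_deviation n x i xi' _ _ Hsa Hsa').
  pose proof (gap_bounds (x i) (a' :: l')).
  nra.
Qed.
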